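(* Let $N\ge2$, $\lambda\in(0,1)$ and let $\varphi_1,\dots,\varphi_N\colon[0,1]\to[0,1]$ be bi-Lipschitz maps with Lipschitz constant at most $\lambda$; let $\Phi=\{\varphi_i\}_{i=1}^N$ and $U=\{(\mu_1,\dots,\mu_{N-1})\in\mathbb{R}^{N-1}:0<\mu_1<\cdots<\mu_{N-1}<1\}$. Then for Lebesgue almost every $\mu\in U$, the pair $(\Phi,\mu)$ has no singular connection.
   Context: For $\alpha=(i_0,\dots,i_{n-1})\in\{1,\dots,N\}^n$, $\varphi^\alpha=\varphi_{i_{n-1}}\circ\cdots\circ\varphi_{i_0}$. For $\mu\in U$, $(\Phi,\mu)$ has a singular connection if there are $n\ge1$, $\alpha\in\{1,\dots,N\}^n$ and $i,j\in\{1,\dots,N-1\}$ with $\varphi^\alpha(\mu_i)=\mu_j$. *)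

From mathcomp Require Import all_boot all_order all_algebra.
From mathcomp Require Import reals.
Set Implicit Arguments. Unset Strict Implicit. Unset Printing Implicit Defensive.
Import Order.TTheory GRing.Theory Num.Theory.
Local Open Scope ring_scope.

Section Defs.
Variable R : realType.

Definition maps_unit_interval (f : R -> R) : Prop :=
  forall x, 0 <= x <= 1 -> 0 <= f x <= 1.

Definition bilipschitz_unit (lam : R) (f : R -> R) : Prop :=
  (forall x y, 0 <= x <= 1 -> 0 <= y <= 1 -> `|f x - f y| <= lam * `|x - y|) /\
  exists c : R, 0 < c /\
    forall x y, 0 <= x <= 1 -> 0 <= y <= 1 -> c * `|x - y| <= `|f x - f y|.

(* phi^alpha = phi_{i_{n-1}} o ... o phi_{i_0} for alpha = (i_0,...,i_{n-1}). *)
Definition comp_word (N : nat) (phi : 'I_N -> R -> R) (alpha : seq 'I_N) (x : R) : R :=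
  foldl (fun y k => phi k y) x alpha.

Definition in_U (m : nat) (mu : 'I_m -> R) : Prop :=
  (forall i, 0 < mu i < 1) /\ (forall i j : 'I_m, (i < j)%N -> mu i < mu j).

Definition singular_connection (N : nat) (phi : 'I_N -> R -> R) (mu : 'I_N.-1 -> R) : Prop :=
  exists (alpha : seq 'I_N) (i j : 'I_N.-1),
    (1 <= size alpha)%N /\ comp_word phi alpha (mu i) = mu j.

Definition lebesgue_null (m : nat) (A : ('I_m -> R) -> Prop) : Prop :=
  forall eps : R, 0 < eps ->
    exists a b : nat -> 'I_m -> R,
      (forall k i, a k i <= b k i) /\
      (forall x, A x -> exists k, forall i, a k i <= x i <= b k i) /\
      (forall K, \sum_(k < K) \prod_(i < m) (b k i - a k i) <= eps).

End Defs.

From mathcomp Require Import all_boot all_order all_algebra.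
From mathcomp Require Import reals.
From mathcomp Require Import ring lra zify.
From Stdlib Require Import ClassicalEpsilon Classical Cantor.
Import Order.TTheory GRing.Theory Num.Theory.
Local Open Scope ring_scope.

(** The parameters with a singular connection form the countable union, over
    words [alpha] and indices [i], [j], of the sets [phi^alpha (mu_i) = mu_j].
    For [i != j] such a set lies on the graph of the 1-Lipschitz map
    [phi^alpha], which the grid of [M] boxes of widths [1/M] and [2/M] in the
    coordinates [i] and [j] covers with total volume [2/M].  For [i = j],
    [phi^alpha] is a contraction of [[0,1]], so it has at most one fixed point
    and the set lies on a hyperplane. *)

Lemma ler_sum_subset_uniq [R : numDomainType] [T : eqType] (s s' : seq T)
    (F : T -> R) :
  (forall x, 0 <= F x) -> uniq s -> uniq s' -> {subset s <= s'} ->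
  \sum_(x <- s) F x <= \sum_(x <- s') F x.
Proof.
move=> F_ge0 s_uniq s'_uniq ss'.
rewrite [leRHS](bigID (mem s)) /= -[X in X <= _]addr0 lerD ?sumr_ge0 //.
have filter_perm : perm_eq [seq x <- s' | x \in s] s.
  apply: uniq_perm => [||x]; rewrite ?filter_uniq // mem_filter.
  by case: (boolP (x \in s)) => //= /ss' ->.
by rewrite -[leRHS]big_filter (perm_big _ filter_perm).
Qed.

Lemma sum_geometric_half (R : numFieldType) n :
  \sum_(t < n) (2^-1 : R) ^+ t.+1 = 1 - 2^-1 ^+ n.
Proof.
elim: n => [|n IH]; first by rewrite big_ord0 expr0 subrr.
by rewrite big_ord_recr /= IH !exprSr; set y := _ ^+ n; field.
Qed.

Lemma sum_of_nat_le_square [R : numDomainType] [F : nat * nat -> R] K :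
  (forall p, 0 <= F p) ->
  \sum_(0 <= k < K) F (of_nat k) <=
  \sum_(0 <= t < K) \sum_(0 <= l < K) F (t, l).
Proof.
move=> F_ge0; rewrite -(big_map of_nat xpredT) -big_allpairs.
apply: ler_sum_subset_uniq => //.
- by rewrite map_inj_uniq ?iota_uniq //; apply: (can_inj cancel_to_of).
- by rewrite allpairs_uniq ?iota_uniq // => -[? ?] [? ?].
move=> p /mapP[k]; rewrite mem_iota => /andP[_ kK] ->.
case E: (of_nat k) => [t l].
have := to_nat_non_decreasing t l; rewrite -E cancel_to_of => tlk.
by apply/allpairsP; exists (t, l); rewrite /= !mem_iota; split=> //; lia.
Qed.

Section LebesgueNull.
Context {R : realType} {m : nat}.
Implicit Types (A B : ('I_m -> R) -> Prop).

Lemma lebesgue_nullS [A B] :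
  (forall x, A x -> B x) -> lebesgue_null B -> lebesgue_null A.
Proof.
move=> AB nullB eps /nullB[a [b [ab [coverB vol]]]].
by exists a, b; split=> //; split=> // x /AB /coverB.
Qed.

Lemma lebesgue_null_bigcup_nat (A : nat -> ('I_m -> R) -> Prop) :
  (forall t, lebesgue_null (A t)) -> lebesgue_null (fun x => exists t, A t x).
Proof.
move=> nullA eps eps_gt0.
pose cover t (ab : (nat -> 'I_m -> R) * (nat -> 'I_m -> R)) :=
  (forall k i, ab.1 k i <= ab.2 k i) /\
  (forall x, A t x -> exists k, forall i, ab.1 k i <= x i <= ab.2 k i) /\
  (forall K, \sum_(k < K) \prod_(i < m) (ab.2 k i - ab.1 k i)
               <= eps * 2^-1 ^+ t.+1).
have [ab ab_cover] : exists ab, forall t, cover t (ab t).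
  apply: choice => t.
  have weight_gt0 : 0 < eps * 2^-1 ^+ t.+1.
    by rewrite mulr_gt0 // exprn_gt0 // invr_gt0.
  by have [a [b ?]] := nullA t _ weight_gt0; exists (a, b).
pose F p := \prod_(i < m) ((ab p.1).2 p.2 i - (ab p.1).1 p.2 i).
have F_ge0 p : 0 <= F p.
  by apply: prodr_ge0 => i _; rewrite subr_ge0; apply: (ab_cover p.1).1.
(* Box [k] of the union is box [l] of the cover of [A t],
   where [of_nat k = (t, l)] *)
exists (fun k => (ab (of_nat k).1).1 (of_nat k).2).
exists (fun k => (ab (of_nat k).1).2 (of_nat k).2).
split; first by move=> k; apply: (ab_cover _).1.
split=> [x [t /(ab_cover t).2.1 [l x_in]]|K].
  by exists (to_nat (t, l)); rewrite cancel_of_to.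
rewrite -(big_mkord xpredT (F \o of_nat)).
apply: le_trans (sum_of_nat_le_square K F_ge0) _.
apply: (@le_trans _ _ (\sum_(0 <= t < K) eps * 2^-1 ^+ t.+1)).
  by apply: ler_sum => t _; rewrite big_mkord; apply: (ab_cover t).2.2.
rewrite -mulr_sumr big_mkord sum_geometric_half ler_piMr ?(ltW eps_gt0) //.
by rewrite gerBl exprn_ge0 // invr_ge0.
Qed.

(* Every box of a cover contributes its volume, and a degenerate box has
   volume [0] only when [0 < m]. *)
Hypothesis m_gt0 : (0 < m)%N.

Lemma lebesgue_null_finite_cover A :
  (forall eps, 0 < eps -> exists (M : nat) (a b : nat -> 'I_m -> R),
     [/\ forall k i, a k i <= b k i,
         forall x, A x -> exists2 k, (k < M)%N & forall i, a k i <= x i <= b k i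
       & \sum_(k < M) \prod_(i < m) (b k i - a k i) <= eps]) ->
  lebesgue_null A.
Proof.
move=> coverA eps eps_gt0.
have [M [a [b [ab cover vol]]]] := coverA eps eps_gt0.
pose F k := \prod_(i < m) (b k i - a k i).
exists (fun k i => if (k < M)%N then a k i else 0).
exists (fun k i => if (k < M)%N then b k i else 0).
split; first by move=> k i; case: ifP.
split=> [x /cover [k kM x_in]|K]; first by exists k; rewrite kM.
have padded_vol k : \prod_(i < m) ((if (k < M)%N then b k i else 0) -
                                   (if (k < M)%N then a k i else 0))
                    = if (k < M)%N then F k else 0.
  by case: ifP => // _; rewrite (bigD1 (Ordinal m_gt0)) //= subrr mul0r.
under eq_bigr do rewrite padded_vol.
rewrite -(big_mkord xpredT (fun k => if (k < M)%N then F k else 0)) -big_mkcond.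
rewrite -big_filter; apply: le_trans vol; rewrite -(big_mkord xpredT F).
apply: ler_sum_subset_uniq => [k||| k].
- by apply: prodr_ge0 => i _; rewrite subr_ge0.
- by rewrite filter_uniq ?iota_uniq.
- exact: iota_uniq.
by rewrite mem_filter !mem_index_iota => /andP[->].
Qed.

Lemma lebesgue_null0 : lebesgue_null (fun _ : 'I_m -> R => False).
Proof.
apply: lebesgue_null_finite_cover => eps eps_gt0.
by exists 0%N, (fun _ _ => 0), (fun _ _ => 0); split=> //; rewrite big_ord0 ltW.
Qed.

Lemma lebesgue_null_bigcup (I : countType) (A : I -> ('I_m -> R) -> Prop) :
  (forall t, lebesgue_null (A t)) -> lebesgue_null (fun x => exists t, A t x).
Proof.
move=> nullA.
apply: (lebesgue_nullS (B := fun x =>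
  exists n, if unpickle n is Some t then A t x else False)).
  by move=> x [t Atx]; exists (pickle t); rewrite pickleK.
apply: lebesgue_null_bigcup_nat => n.
by case: (unpickle n) => [t|]; [exact: nullA | exact: lebesgue_null0].
Qed.

End LebesgueNull.

Section Hyperplane.
Context {R : realType} {m : nat} (i : 'I_m).

Let m_gt0 : (0 < m)%N := leq_ltn_trans (leq0n i) (ltn_ord i).

Lemma lebesgue_null_hyperplane (c : R) :
  lebesgue_null (fun mu : 'I_m -> R => (forall k, 0 < mu k < 1) /\ mu i = c).
Proof.
apply: lebesgue_null_finite_cover => // eps eps_gt0.
exists 1%N, (fun _ k => if k == i then c else 0),
  (fun _ k => if k == i then c else 1).
split=> [_ k|x [x_in xi]|]; first by case: eqP.
  exists 0%N => // k; case: eqP => [->|_]; first by rewrite xi lexx.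
  by have /andP[? ?] := x_in k; rewrite !ltW.
by rewrite big_ord1 (bigD1 i) //= eqxx subrr mul0r ltW.
Qed.

End Hyperplane.

Section LipschitzGraph.
Context {R : realType} {m : nat} {i j : 'I_m} {g : R -> R}.

Let m_gt0 : (0 < m)%N := leq_ltn_trans (leq0n i) (ltn_ord i).
Hypothesis neq_ij : i != j.
Hypothesis g_lip :
  forall x y, 0 <= x <= 1 -> 0 <= y <= 1 -> `|g x - g y| <= `|x - y|.

(* Box [l] of the grid of mesh [d = 1/M] around the graph [mu_j = g mu_i]. *)
Definition graph_box_lo (d : R) (l : nat) (k : 'I_m) : R :=
  if k == i then l%:R * d else if k == j then g (l%:R * d) - d else 0.
Definition graph_box_hi (d : R) (l : nat) (k : 'I_m) : R :=
  if k == i then l.+1%:R * d else if k == j then g (l%:R * d) + d else 1.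

Lemma graph_box_le d l k : 0 <= d -> graph_box_lo d l k <= graph_box_hi d l k.
Proof.
move=> d_ge0; rewrite /graph_box_lo /graph_box_hi.
case: eqP => _; first by rewrite ler_wpM2r // ler_nat.
by case: eqP => _ //; lra.
Qed.

Lemma graph_box_volume d l :
  \prod_(k < m) (graph_box_hi d l k - graph_box_lo d l k) = 2 * d ^+ 2.
Proof.
rewrite /graph_box_lo /graph_box_hi (bigD1 i) //= eqxx (bigD1 j) 1?eq_sym //=.
rewrite (negbTE neq_ij) eqxx big1 => [|k /andP[/negbTE-> /negbTE->]].
  by rewrite -addn1 natrD; ring.
by rewrite subr0.
Qed.

Lemma graph_box_cover (M : nat) x : (0 < M)%N ->
  (forall k, 0 < x k < 1) -> g (x i) = x j ->
  exists2 l, (l < M)%N &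
    forall k, graph_box_lo M%:R^-1 l k <= x k <= graph_box_hi M%:R^-1 l k.
Proof.
move=> M_gt0 x_in gxi; have /andP[xi_gt0 xi_lt1] := x_in i.
have Mr_gt0 : 0 < M%:R :> R by rewrite ltr0n.
have xiM_ge0 : 0 <= x i * M%:R by rewrite mulr_ge0 ?ltW.
pose l := Num.truncn (x i * M%:R).
have /andP[l_le l_gt] := truncn_itv xiM_ge0.
have lM : (l < M)%N.
  by rewrite truncn_lt_nat // -[ltRHS]mul1r ltr_pM2r.
have lo : l%:R / M%:R <= x i by rewrite ler_pdivrMr.
have hi : x i <= l.+1%:R / M%:R by rewrite ler_pdivlMr // ltW.
exists l => // k; rewrite /graph_box_lo /graph_box_hi.
case: eqP => [->|_]; first by rewrite lo hi.
case: eqP => [->|_]; last by have /andP[? ?] := x_in k; rewrite !ltW.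
rewrite -gxi -ler_distl; apply: le_trans (g_lip _ _ _ _) _.
- by rewrite !ltW.
- by rewrite divr_ge0 // (le_trans lo) ?ltW.
rewrite ger0_norm ?subr_ge0 //; move: hi; rewrite -addn1 natrD mulrDl mul1r.
lra.
Qed.

Lemma lebesgue_null_lipschitz_graph :
  lebesgue_null (fun mu : 'I_m -> R =>
    (forall k, 0 < mu k < 1) /\ g (mu i) = mu j).
Proof.
apply: lebesgue_null_finite_cover => // eps eps_gt0.
pose M := (Num.truncn (2 / eps)).+1.
have M_gt0 : 0 < M%:R :> R by rewrite ltr0n.
have eps_M : 2 / eps < M%:R.
  by have /andP[] := truncn_itv (ltW (divr_gt0 (ltr0n R 2) eps_gt0)).
exists M, (graph_box_lo M%:R^-1), (graph_box_hi M%:R^-1).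
split=> [l k|x [x_in gxi]|].
- by apply: graph_box_le; rewrite invr_ge0 ltW.
- exact: graph_box_cover.
under eq_bigr do rewrite graph_box_volume.
rewrite sumr_const card_ord.
have -> : 2 * M%:R^-1 ^+ 2 *+ M = 2 / M%:R :> R.
  by rewrite -mulr_natr; field; rewrite gt_eqF.
by move: eps_M; rewrite ler_pdivrMr // ltr_pdivrMr // mulrC => /ltW.
Qed.

End LipschitzGraph.

Lemma contraction_fixpoint_unique [R : realFieldType] [g : R -> R] [q : R] :
  q < 1 ->
  (forall x y, 0 <= x <= 1 -> 0 <= y <= 1 -> `|g x - g y| <= q * `|x - y|) ->
  exists c, forall x, 0 <= x <= 1 -> g x = x -> x = c.
Proof.
move=> q_lt1 g_contr.
case: (classic (exists2 c, 0 <= c <= 1 & g c = c)) => [[c c_in gc]|no_fix].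
  exists c => x x_in gx; have := g_contr _ _ x_in c_in; rewrite gx gc => dist.
  have : `|x - c| <= 0 by have := normr_ge0 (x - c); nra.
  by rewrite normr_le0 subr_eq0 => /eqP.
by exists 0 => x x_in gx; case: no_fix; exists x.
Qed.

Lemma comp_word_lipschitz [R : realType] [N] [lam : R] [phi : 'I_N -> R -> R] :
  0 <= lam -> (forall k, maps_unit_interval (phi k)) ->
  (forall k, bilipschitz_unit lam (phi k)) ->
  forall alpha x y, 0 <= x <= 1 -> 0 <= y <= 1 ->
  `|comp_word phi alpha x - comp_word phi alpha y|
    <= lam ^+ size alpha * `|x - y|.
Proof.
move=> lam_ge0 phi_unit phi_lip.
elim=> [|a alpha IH] x y x_in y_in /=; first by rewrite expr0 mul1r.
apply: le_trans (IH _ _ (phi_unit a x x_in) (phi_unit a y y_in)) _.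
by rewrite exprSr -mulrA ler_wpM2l ?exprn_ge0 //; apply: (phi_lip a).1.
Qed.

Theorem lemma4p3 (R : realType) (N : nat) (lam : R) (phi : 'I_N -> R -> R) :
  (2 <= N)%N -> 0 < lam < 1 ->
  (forall k, maps_unit_interval (phi k)) ->
  (forall k, bilipschitz_unit lam (phi k)) ->
  lebesgue_null (fun mu : 'I_N.-1 -> R => in_U mu /\ singular_connection phi mu).
Proof.
move=> N_ge2 /andP[lam_gt0 lam_lt1] phi_unit phi_lip.
have m_gt0 : (0 < N.-1)%N by rewrite -subn1 subn_gt0.
pose connection (t : 'I_N * seq 'I_N * 'I_N.-1 * 'I_N.-1) (mu : 'I_N.-1 -> R) :=
  let: (a, alpha, i, j) := t in
  (forall k, 0 < mu k < 1) /\ comp_word phi (a :: alpha) (mu i) = mu j.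
apply: (lebesgue_nullS (B := fun mu => exists t, connection t mu)).
  move=> mu [[mu_in _] [[|a alpha] [i [j [//= _ conn]]]]].
  by exists (a, alpha, i, j).
apply: lebesgue_null_bigcup => // -[[[a alpha] i] j].
have word_lip :=
  comp_word_lipschitz (ltW lam_gt0) phi_unit phi_lip (a :: alpha).
case: (eqVneq i j) => [<-|neq_ij].
- have word_contr : lam ^+ size (a :: alpha) < 1 by rewrite exprn_ilt1 ?ltW.
  have [c fix_c] := contraction_fixpoint_unique word_contr word_lip.
  apply: (lebesgue_nullS _ (lebesgue_null_hyperplane i c)) => mu [mu_in fixed].
  by split=> //; have /andP[? ?] := mu_in i; apply: fix_c; rewrite ?ltW.
- have word_nonexpansive x y : 0 <= x <= 1 -> 0 <= y <= 1 ->
      `|comp_word phi (a :: alpha) x - comp_word phi (a :: alpha) y|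
        <= `|x - y|.
    move=> x_in y_in; apply: le_trans (word_lip x y x_in y_in) _.
    by rewrite ler_piMl ?normr_ge0 // exprn_ile1 ?ltW.
  apply: (lebesgue_nullS _
    (lebesgue_null_lipschitz_graph neq_ij word_nonexpansive)).
  by move=> mu [].
Qed.
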